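(* Assume $n>3t+2d$. In any execution of Algorithm 1, if a correct process $p_i$ mbrb-broadcasts an app-message $m$ with sequence number $sn$, then at least one correct process eventually mbrb-delivers $m$ from $p_i$ with sequence number $sn$.
   Context: System model. There are $n$ asynchronous processes $p_1,\dots,p_n$ with distinct known identities. Up to $t$ are Byzantine (arbitrary behavior); the rest are correct; $c$ is the number of correct processes in the execution, $n-t\le c\le n$. The network is fully connected, asynchronous, never corrupts/duplicates/creates messages; ''broadcast $M$'' sends $M$ to all $n$ processes; a message adversary may suppress, per broadcast by a correct process, up to $d$ ($0\le d<c$) copies addressed to correct processes, all other copies among correct processes being eventually received. Signatures are unforgeable and public keys are known. Algorithm 1 (code for $p_i$). Each process stores, for each triplet $(m,sn,j)$, a set of saved valid signatures of that triplet, at most one per signer. On $\mathrm{mbrb\_broadcast}(m,sn)$: $p_i$ saves its own signature of $(m,sn,i)$ and broadcasts $\mathrm{BUNDLE}(m,sn,i,S)$, $S$ the saved signatures for $(m,sn,i)$. On receiving $\mathrm{BUNDLE}(m,sn,j,sigs)$: if $p_i$ has not already mbrb-delivered some $(-,sn,j)$ and $sigs$ contains a valid signature of $(m,sn,j)$ by $p_j$, then: (1) save all new valid signatures of $(m,sn,j)$ in $sigs$; (2) if $p_i$ has not yet signed any $(-,sn,j)$, save its own signature of $(m,sn,j)$ and broadcast $\mathrm{BUNDLE}(m,sn,j,\text{all saved signatures for }(m,sn,j))$; (3) if strictly more than $\frac{n+t}{2}$ signatures for $(m,sn,j)$ are saved, broadcast $\mathrm{BUNDLE}(m,sn,j,\text{all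 saved signatures})$ and mbrb-deliver $(m,sn,j)$. A correct process never uses the same sequence number twice. *)

From mathcomp Require Import all_boot.
Set Implicit Arguments.
Unset Strict Implicit.
Unset Printing Implicit Defensive.

Section Model.
Variables (n : nat) (M : eqType).

(* A triplet (m, sn, j): app-message m, sequence number sn, sender p_j. *)
Definition triplet := (M * nat * 'I_n)%type.
(* A (valid, symbolic) signature: (signer k, signed triplet). Signatures of a
   correct signer can only exist if that signer signed (unforgeability, see
   [byz_unforgeable] below); invalid signatures are ignored by receivers and
   are therefore not represented. *)
Definition sig := ('I_n * triplet)%type.

Record bundle := Bundle { b_m : M; b_sn : nat; b_j : 'I_n; b_sigs : seq sig }.

Record lstate := LState {
  saved  : seq sig;      (* saved valid signatures (as a multiset; counted up to duplicates) *)
  mysigs : seq triplet;  (* triplets this process has signed *)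
  deliv  : seq triplet
}.

Definition init_state : lstate := LState [::] [::] [::].

(* The saved signatures for tr, at most one per signer. *)
Definition savedFor (st : lstate) (tr : triplet) : seq sig :=
  undup [seq s <- saved st | s.2 == tr].

Definition has_signed_slot (st : lstate) (sn : nat) (j : 'I_n) : bool :=
  has (fun tr : triplet => (tr.1.2 == sn) && (tr.2 == j)) (mysigs st).

Definition has_delivered_slot (st : lstate) (sn : nat) (j : 'I_n) : bool :=
  has (fun tr : triplet => (tr.1.2 == sn) && (tr.2 == j)) (deliv st).

(* Result of a handler: new state, broadcast bundles (in order), delivered triplets. *)
Definition result := (lstate * seq bundle * seq triplet)%type.

Definition on_broadcast (i : 'I_n) (st : lstate) (m : M) (sn : nat) : result :=
  let tr : triplet := (m, sn, i) in
  let st1 := LState ((i, tr) :: saved st) (tr :: mysigs st) (deliv st) in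
  (st1, [:: Bundle m sn i (savedFor st1 tr)], [::]).

Variable t : nat.

Definition on_receive (i : 'I_n) (st : lstate) (b : bundle) : result :=
  let m := b_m b in let sn := b_sn b in let j := b_j b in
  let tr : triplet := (m, sn, j) in
  if ~~ has_delivered_slot st sn j && ((j, tr) \in b_sigs b) then
    let st1 := LState (saved st ++ [seq s <- b_sigs b | s.2 == tr])
                      (mysigs st) (deliv st) in
    let r2 : lstate * seq bundle :=
      if ~~ has_signed_slot st1 sn j then
        let st' := LState ((i, tr) :: saved st1) (tr :: mysigs st1) (deliv st1) in
        (st', [:: Bundle m sn j (savedFor st' tr)])
      else (st1, [::]) in
    let st2 := r2.1 in
    if n + t < 2 * size (savedFor st2 tr) then
      (LState (saved st2) (mysigs st2) (tr :: deliv st2),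
       r2.2 ++ [:: Bundle m sn j (savedFor st2 tr)], [:: tr])
    else (st2, r2.2, [::])
  else (st, [::], [::]).

(* Where a received bundle comes from: the q-th broadcast performed during
   global step k by a correct process, or a Byzantine process. *)
Inductive source := FromCorrect of nat & nat | FromByz.

Inductive event :=
  | Idle
  | Invoke of 'I_n & M & nat
  | Recv of 'I_n & bundle & source.

Definition actor (e : event) : option 'I_n :=
  match e with Idle => None | Invoke i _ _ => Some i | Recv i _ _ => Some i end.

Definition handle (i : 'I_n) (st : lstate) (e : event) : result :=
  match e with
  | Idle => (st, [::], [::])
  | Invoke _ m sn => on_broadcast i st m sn
  | Recv _ b _ => on_receive i st b
  end.

(* State of p_i before global step k. *)
Fixpoint lst (ev : nat -> event) (i : 'I_n) (k : nat) : lstate :=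
  match k with
  | 0 => init_state
  | k'.+1 => if actor (ev k') == Some i then (handle i (lst ev i k') (ev k')).1.1
             else lst ev i k'
  end.

Definition outs (ev : nat -> event) (k : nat) : seq bundle * seq triplet :=
  match actor (ev k) with
  | Some i => let r := handle i (lst ev i k) (ev k) in (r.1.2, r.2)
  | None => ([::], [::])
  end.
Definition bcasts ev k := (outs ev k).1.
Definition delivers ev k := (outs ev k).2.

Record valid_execution (d : nat) (B : {set 'I_n}) (ev : nat -> event) : Prop := {
  invoke_correct : forall k i m sn, ev k = Invoke i m sn -> i \notin B;
  recv_correct : forall k i b s, ev k = Recv i b s -> i \notin B;
  sn_unique : forall k1 k2 i m1 m2 sn,
    ev k1 = Invoke i m1 sn -> ev k2 = Invoke i m2 sn -> k1 = k2;
  (* no creation / corruption: a copy of an earlier correct broadcast *)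
  recv_from_correct : forall k i b k0 q, ev k = Recv i b (FromCorrect k0 q) ->
    k0 < k /\ onth (bcasts ev k0) q = Some b;
  no_dup : forall k1 k2 i b1 b2 k0 q,
    ev k1 = Recv i b1 (FromCorrect k0 q) -> ev k2 = Recv i b2 (FromCorrect k0 q) ->
    k1 = k2;
  byz_exists : forall k i b, ev k = Recv i b FromByz -> exists x, x \in B;
  byz_unforgeable : forall k i b s tr, ev k = Recv i b FromByz ->
    (s, tr) \in b_sigs b -> s \notin B -> tr \in mysigs (lst ev s k);
  (* message adversary: per correct broadcast, at most d correct processes
     never receive their copy; all others eventually receive it *)
  adversary : forall k0 q b, onth (bcasts ev k0) q = Some b ->
    exists R : {set 'I_n}, [/\ R \subset ~: B, n - #|B| - d <= #|R| &
      forall r, r \in R -> exists k, ev k = Recv r b (FromCorrect k0 q)]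
}.

End Model.

From mathcomp Require Import all_boot zify boolp.
Set Implicit Arguments. Unset Strict Implicit. Unset Printing Implicit Defensive.

(* Suppose no correct process ever delivers (m, sn, i). A delivery of any other
   message in the slot (sn, i) would need p_i's signature on it, which by
   unforgeability and the uniqueness of sequence numbers only exists for m; so no
   correct process ever closes that slot. Hence every correct process receiving a
   bundle for (m, sn, i) signed by p_i accepts it, and its own forwarded bundle
   reaches at least n - |B| - d correct processes, each of which thereby learns its
   signature. Double counting in this "signature reaches" graph yields a correct
   process that collects n - |B| - d distinct signatures, which is more than
   (n + t) / 2 because 3t + 2d < n: that process delivers, a contradiction. *)

Lemma exists_indegree_ge (T : finType) (W : {set T}) (r : rel T) (c : nat) :
  W != set0 -> (forall w, w \in W -> c <= #|[set x in W | r w x]|) ->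
  exists2 x, x \in W & c <= #|[set w in W | r w x]|.
Proof.
move=> W0 outdeg; apply/exists_inP; apply: contraNT W0 => /exists_inPn indeg.
pose indegree x := #|[set w in W | r w x]|.
have card_rel (P : pred T) : #|[set x in W | P x]| = \sum_(x in W) P x.
  rewrite -sum1_card big_mkcond [RHS]big_mkcond; apply: eq_bigr => x _.
  by rewrite inE; case: (x \in W).
have edges : \sum_(w in W) #|[set x in W | r w x]| = \sum_(x in W) indegree x.
  rewrite (eq_bigr _ (fun w _ => card_rel _)) exchange_big.
  by apply: eq_bigr => x _; rewrite /indegree card_rel.
have : \sum_(x in W) (indegree x).+1 <= \sum_(x in W) indegree x.
  rewrite -edges; apply: leq_trans (leq_sum _ outdeg).
  by apply: leq_sum => x /indeg; rewrite ltnNge.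
under eq_bigr do rewrite -addn1.
by rewrite big_split /= sum1_card -[X in _ <= X]addn0 leq_add2l leqn0 cards_eq0.
Qed.

Lemma latest_witness (T : eqType) (s : seq T) (P : T -> nat -> Prop) :
  s != [::] -> (forall w, w \in s -> exists K, P w K) ->
  exists K, (exists2 w, w \in s & P w K) /\
            forall w, w \in s -> exists2 K', K' <= K & P w K'.
Proof.
elim: s => [|w s IH] // _ ex.
have [Kw Pw] := ex w (mem_head _ _).
have [->|s0] := eqVneq s [::].
  by exists Kw; split=> [|w']; [exists w; rewrite ?inE | rewrite inE => /eqP ->; exists Kw].
have [|K [[w' w's Pw'] late]] := IH s0; first by move=> w' w's; apply: ex; rewrite inE w's orbT.
have [KwK|KKw] := leqP Kw K.
  exists K; split; first by exists w'; rewrite // inE w's orbT.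
  by move=> v; rewrite inE => /predU1P[->|/late //]; exists Kw.
exists Kw; split; first by exists w; rewrite ?mem_head.
move=> v; rewrite inE => /predU1P[->|/late [K' K'K Pv]]; first by exists Kw.
by exists K'; rewrite // (leq_trans K'K (ltnW KKw)).
Qed.

Section Handlers.
Variables (n t : nat) (M : eqType).
Implicit Types (st : lstate n M) (b : bundle n M) (tr : triplet n M) (z : sig n M).

Definition triplet_of b : triplet n M := (b_m b, b_sn b, b_j b).

Definition sub_lstate st st' := [/\ {subset saved st <= saved st'},
  {subset mysigs st <= mysigs st'} & {subset deliv st <= deliv st'}].

Lemma sub_lstate_refl st : sub_lstate st st.
Proof. by split. Qed.

Lemma sub_lstate_trans st1 st2 st3 :
  sub_lstate st1 st2 -> sub_lstate st2 st3 -> sub_lstate st1 st3.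
Proof. by move=> [? ? ?] [? ? ?]; split=> z; auto. Qed.

Lemma mem_savedFor st tr z : (z \in savedFor st tr) = (z \in saved st) && (z.2 == tr).
Proof. by rewrite mem_undup mem_filter andbC. Qed.

Lemma handle_sub x st e : sub_lstate st (handle t x st e).1.1.
Proof.
case: e => [|i m sn|i b s] /=; first exact: sub_lstate_refl.
  by split=> z /=; rewrite ?inE => ->; rewrite ?orbT.
rewrite /on_receive; case: ifP => _; last exact: sub_lstate_refl.
case: (~~ has_signed_slot _ _ _) => /=; case: ifP => _ /=;
  by split=> z /= hz; rewrite ?inE ?mem_cat ?hz ?orbT.
Qed.

Lemma handle_broadcast_saved x st e q b :
  onth (handle t x st e).1.2 q = Some b -> {subset b_sigs b <= saved (handle t x st e).1.1}.
Proof.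
case: e => [|i m sn|i b' s] /=; first by rewrite onth0n.
  by case: q => [|q] /=; [case=> <- z; rewrite mem_savedFor => /andP[] | rewrite onth0n].
rewrite /on_receive; case: ifP => _; last by rewrite onth0n.
case: (~~ has_signed_slot _ _ _) => /=; case: ifP => _ /=;
  by case: q => [|[|q]] /=; rewrite ?onth0n //; case=> <- z; rewrite mem_savedFor => /andP[].
Qed.

Section OnReceive.
Variables (x : 'I_n) (st : lstate n M) (b : bundle n M).
Let r := on_receive t x st b.

Lemma on_receive_saved z : z \in saved r.1.1 ->
  [\/ z \in saved st, z \in b_sigs b | z = (x, triplet_of b) /\ triplet_of b \in mysigs r.1.1].
Proof.
rewrite /r /on_receive; case: ifP => _; last by constructor 1.
case: (~~ has_signed_slot _ _ _) => /=; case: ifP => _ /=; rewrite ?inE ?mem_cat ?mem_filter.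
all: first [move=> /or3P[/eqP->|h|/andP[_ h]] | move=> /orP[h|/andP[_ h]]];
  by [constructor 1 | constructor 2 | constructor 3; rewrite /triplet_of eqxx].
Qed.

Lemma on_receive_signs tr : tr \in mysigs r.1.1 -> tr \notin mysigs st ->
  [/\ tr = triplet_of b, (tr.2, tr) \in b_sigs b & exists2 b', onth r.1.2 0 = Some b' &
      [/\ triplet_of b' = tr, (x, tr) \in b_sigs b' & (tr.2, tr) \in b_sigs b']].
Proof.
rewrite /r /on_receive; case: ifP => [/andP[_ hin]|_]; last by move=> ->.
case: (~~ has_signed_slot _ _ _) => /=; case: ifP => _ /=; rewrite ?inE;
  try by move=> ->.
all: case/orP => [/eqP->|->] // _; split => //; eexists; first reflexivity.
all: by split; rewrite // mem_savedFor /= ?inE ?mem_cat ?mem_filter !eqxx ?hin ?orbT.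
Qed.

Lemma on_receive_deliv tr : tr \in deliv r.1.1 -> tr \in deliv st \/ tr \in r.2.
Proof.
rewrite /r /on_receive; case: ifP => _; last by left.
case: (~~ has_signed_slot _ _ _) => /=; case: ifP => _ //=; try by left.
all: by rewrite !inE => /orP[->|->]; auto.
Qed.

Lemma on_receive_delivered tr : tr \in r.2 -> tr = triplet_of b /\ (tr.2, tr) \in b_sigs b.
Proof.
rewrite /r /on_receive; case: ifP => [/andP[_ hin]|_] //.
by case: (~~ has_signed_slot _ _ _) => /=; case: ifP => _ //=; rewrite inE => /eqP ->.
Qed.

Lemma on_receive_accept :
  ~~ has_delivered_slot st (b_sn b) (b_j b) -> (b_j b, triplet_of b) \in b_sigs b ->
  [/\ {subset [seq s <- b_sigs b | s.2 == triplet_of b] <= saved r.1.1},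
      has_signed_slot r.1.1 (b_sn b) (b_j b) &
      n + t < 2 * size (savedFor r.1.1 (triplet_of b)) -> triplet_of b \in r.2].
Proof.
move=> hd hin; rewrite /r /on_receive hd hin /= /triplet_of.
case E: (~~ has_signed_slot _ _ _) => /=; case: ifP => hc //=; rewrite ?inE ?eqxx;
  split => //; try (by move=> z hz; rewrite ?in_cons mem_cat hz !orbT);
  try (by rewrite /has_signed_slot /= !eqxx); try by rewrite hc.
all: by move/negbT: E; rewrite negbK.
Qed.

End OnReceive.
End Handlers.

Section Execution.
Variables (n t d : nat) (M : eqType) (B : {set 'I_n}) (ev : nat -> event n M).
Hypothesis V : valid_execution t d B ev.
Local Notation L := (lst t ev).

Lemma lst_step x K : actor (ev K) = Some x -> L x K.+1 = (handle t x (L x K) (ev K)).1.1.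
Proof. by move=> h /=; rewrite h eqxx. Qed.

Lemma lst_idle x K : actor (ev K) != Some x -> L x K.+1 = L x K.
Proof. by move=> h /=; rewrite (negbTE h). Qed.

Lemma lst_sub x K K' : K <= K' -> sub_lstate (L x K) (L x K').
Proof.
move/subnK <-; elim: (K' - K) => [|j IH]; first exact: sub_lstate_refl.
rewrite addSn /=; case: ifP => _ //; exact: sub_lstate_trans IH (handle_sub _ _ _ _).
Qed.

Lemma saved_lst_mono x K K' : K <= K' -> {subset saved (L x K) <= saved (L x K')}.
Proof. by case/(lst_sub x). Qed.

Lemma mysigs_lst_mono x K K' : K <= K' -> {subset mysigs (L x K) <= mysigs (L x K')}.
Proof. by case/(lst_sub x). Qed.

Lemma actor_correct K x : actor (ev K) = Some x -> x \notin B.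
Proof.
case E: (ev K) => [|i m sn|i b s] //= [<-]; first exact: (invoke_correct V E).
exact: (recv_correct V E).
Qed.

Lemma broadcast_saved K q b : onth (bcasts t ev K) q = Some b ->
  exists2 x, actor (ev K) = Some x & {subset b_sigs b <= saved (L x K.+1)}.
Proof.
rewrite /bcasts /outs; case E: (actor (ev K)) => [x|]; last by rewrite onth0n.
by move=> h; exists x; rewrite // (lst_step E); exact: handle_broadcast_saved h.
Qed.

Definition signatures_authentic K := forall x s tr, x \notin B -> s \notin B ->
  (s, tr) \in saved (L x K) -> tr \in mysigs (L s K).

Lemma received_authentic K x b src s tr : signatures_authentic K ->
  ev K = Recv x b src -> (s, tr) \in b_sigs b -> s \notin B -> tr \in mysigs (L s K).
Proof.
move=> auth E hin hs; case: src E => [K0 q|] E; last exact: (byz_unforgeable V E hin hs).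
have [lt0 hb] := recv_from_correct V E.
have [y hy sav] := broadcast_saved hb.
apply: auth (actor_correct hy) hs _.
exact: (saved_lst_mono lt0 (sav _ hin)).
Qed.

Lemma signed_of_saved K : signatures_authentic K.
Proof.
elim: K => [|K IH] x s tr hx hs //.
have [ax|ax] := eqVneq (actor (ev K)) (Some x); last first.
  by rewrite (lst_idle ax) => /(IH x s tr hx hs); apply: mysigs_lst_mono.
have grow := @mysigs_lst_mono s K K.+1 (leqnSn K).
rewrite [in X in X -> _](lst_step ax).
case E: (ev K) (ax) => [|i m sn|i b src] // [ei]; subst i; rewrite [handle _ _ _ _]/=.
  case/predU1P => [[-> ->]|/(IH x s tr hx hs)/grow //].
  by rewrite (lst_step ax) E inE eqxx.
case/on_receive_saved => [/(IH x s tr hx hs)/grow //|hin|[[-> ->] signed]].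
  exact/grow/(received_authentic IH E hin hs).
by rewrite (lst_step ax) E.
Qed.

Lemma signed_of_received K x b src s tr :
  ev K = Recv x b src -> (s, tr) \in b_sigs b -> s \notin B -> tr \in mysigs (L s K).
Proof. by move=> E; apply: received_authentic E; apply: signed_of_saved. Qed.

Lemma invoked_of_signed K y m sn :
  y \notin B -> (m, sn, y) \in mysigs (L y K) -> exists k0, ev k0 = Invoke y m sn.
Proof.
move=> hy; elim: K => [|K IH] //.
have [ay|ay] := eqVneq (actor (ev K)) (Some y); last by rewrite (lst_idle ay).
have [/IH //|fresh] := boolP ((m, sn, y) \in mysigs (L y K)).
rewrite (lst_step ay).
case E: (ev K) (ay) => [|i m' sn'|i b src] // [ei]; subst i; rewrite [handle _ _ _ _]/=.
  by rewrite inE (negbTE fresh) orbF => /eqP[-> ->]; exists K.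
case/on_receive_signs/(_ fresh) => _ own _.
by move: fresh; rewrite (signed_of_received E own hy).
Qed.

Lemma delivered_at K x tr : tr \in deliv (L x K) ->
  exists2 k1, actor (ev k1) = Some x & tr \in delivers t ev k1.
Proof.
elim: K => [|K IH] //.
have [ax|ax] := eqVneq (actor (ev K)) (Some x); last by rewrite (lst_idle ax).
have out : delivers t ev K = (handle t x (L x K) (ev K)).2 by rewrite /delivers /outs ax.
rewrite (lst_step ax).
case E: (ev K) (ax) out => [|i m sn|i b src] // [ei] out; subst i; rewrite [handle _ _ _ _]/=.
by case/on_receive_deliv => [/IH //|out_K]; exists K; rewrite ?E ?out.
Qed.

Lemma signature_broadcast K x tr : x \notin B -> tr \in mysigs (L x K) ->
  exists K0 q b, onth (bcasts t ev K0) q = Some b /\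
    [/\ triplet_of b = tr, (x, tr) \in b_sigs b & (tr.2, tr) \in b_sigs b].
Proof.
move=> hx; elim: K => [|K IH] //.
have [ax|ax] := eqVneq (actor (ev K)) (Some x); last by rewrite (lst_idle ax).
have [/IH //|fresh] := boolP (tr \in mysigs (L x K)).
have out : bcasts t ev K = (handle t x (L x K) (ev K)).1.2 by rewrite /bcasts /outs ax.
rewrite (lst_step ax).
case E: (ev K) (ax) out => [|i m sn|i b src] // [ei] out; subst i; rewrite [handle _ _ _ _]/=.
  rewrite inE (negbTE fresh) orbF => /eqP ->; exists K, 0; rewrite out /=; eexists; split=> //.
  by split; rewrite // mem_savedFor inE !eqxx.
case/on_receive_signs/(_ fresh) => _ _ [b' hb' spec].
by exists K, 0, b'; rewrite out.
Qed.

Section Validity.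
Variables (k : nat) (i : 'I_n) (m : M) (sn : nat).
Hypothesis invoked : ev k = Invoke i m sn.
Let tr : triplet n M := (m, sn, i).
Let i_correct : i \notin B := invoke_correct V invoked.

Lemma payload_unique K m' : (m', sn, i) \in mysigs (L i K) -> m' = m.
Proof.
case/(invoked_of_signed i_correct) => k0 invoked0.
by move: (invoked0); rewrite (sn_unique V invoked0 invoked) invoked => -[].
Qed.

Hypothesis undelivered : forall K x, actor (ev K) = Some x -> tr \notin delivers t ev K.

Lemma slot_undelivered K x : ~~ has_delivered_slot (L x K) sn i.
Proof.
apply/hasPn => -[[m' sn'] j] /delivered_at [K1 ax del] /=.
apply/negP => /andP[/eqP esn /eqP ej]; subst sn' j.
have out : delivers t ev K1 = (handle t x (L x K1) (ev K1)).2 by rewrite /delivers /outs ax.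
move: (ax) (del); rewrite out; case E: (ev K1) => [|y m0 sn0|y b src] //= _.
case/on_receive_delivered => _ /(signed_of_received E)/(_ i_correct)/payload_unique em.
by subst m'; move: del; apply/negP; apply: undelivered ax.
Qed.

Definition good (b : bundle n M) := (triplet_of b == tr) && ((i, tr) \in b_sigs b).

Lemma accept_good K x b src : ev K = Recv x b src -> good b ->
  [/\ forall w, (w, tr) \in b_sigs b -> (w, tr) \in saved (L x K.+1),
      exists m', (m', sn, i) \in mysigs (L x K.+1) &
      n + t < 2 * size (savedFor (L x K.+1) tr) -> tr \in delivers t ev K].
Proof.
move=> E /andP[/eqP trb own].
have ax : actor (ev K) = Some x by rewrite E.
have out : delivers t ev K = (handle t x (L x K) (ev K)).2 by rewrite /delivers /outs ax.
rewrite out (lst_step ax) E /=.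
have [esn ej] : b_sn b = sn /\ b_j b = i by case: trb.
have := @on_receive_accept n t M x (L x K) b; rewrite trb esn ej.
case/(_ (slot_undelivered K x) own) => sav /hasP[[[m' sn'] j] signed /andP[/eqP/= esn' /eqP/= ej']] thr.
split=> //; last by exists m'; rewrite -esn' -ej'.
by move=> w hw; apply: sav; rewrite mem_filter hw eqxx.
Qed.

Lemma signer_broadcasts_good K w m' : w \notin B -> (m', sn, i) \in mysigs (L w K) ->
  exists K0 q b, [/\ onth (bcasts t ev K0) q = Some b, good b & (w, tr) \in b_sigs b].
Proof.
move=> hw /(signature_broadcast hw) [K0 [q [b [bc [trb wsig isig]]]]].
have [y ay sav] := broadcast_saved bc.
have em : m' = m.
  by apply: (@payload_unique K0.+1); apply: signed_of_saved (actor_correct ay) i_correct _; apply: sav.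
subst m'; exists K0, q, b; split=> //.
by rewrite /good trb eqxx.
Qed.

Definition sig_received_at w x K :=
  exists b src, [/\ ev K = Recv x b src, good b & (w, tr) \in b_sigs b].

Definition sig_reaches w x : bool := `[< exists K, sig_received_at w x K >].

Let quorum := n - #|B| - d.

Lemma good_broadcast_reaches K0 q b : onth (bcasts t ev K0) q = Some b -> good b ->
  exists2 R : {set 'I_n}, quorum <= #|R| &
    forall r w, r \in R -> (w, tr) \in b_sigs b -> sig_reaches w r.
Proof.
move=> bc g; have [R [_ large recv]] := adversary V bc.
exists R => // r w /recv [K E] hw; apply/asboolP.
by exists K, b, (FromCorrect K0 q).
Qed.

Let receivers := [set x | sig_reaches i x].

Lemma receivers_outdegree w :
  w \in receivers -> quorum <= #|[set x in receivers | sig_reaches w x]|.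
Proof.
rewrite inE => /asboolP [K [b [src [E g _]]]].
have [_ [m' signed] _] := accept_good E g.
have [K0 [q [b' [bc g' wsig]]]] := signer_broadcasts_good (recv_correct V E) signed.
have [R large reach] := good_broadcast_reaches bc g'.
apply: leq_trans large _; apply/subset_leq_card/subsetP => r rR.
by rewrite !inE !reach //; case/andP: g'.
Qed.

Hypotheses (n_large : 3 * t + 2 * d < n) (B_small : #|B| <= t).

Lemma quorum_majority : n + t < 2 * quorum.
Proof. rewrite /quorum; lia. Qed.

Lemma receivers_nonempty : receivers != set0.
Proof.
have ai : actor (ev k) = Some i by rewrite invoked.
have signed : (m, sn, i) \in mysigs (L i k.+1) by rewrite (lst_step ai) invoked /= inE eqxx.
have [K0 [q [b [bc g _]]]] := signer_broadcasts_good i_correct signed.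
have [R large reach] := good_broadcast_reaches bc g.
have /card_gt0P [r rR] : 0 < #|R| by apply: leq_trans large; have := quorum_majority; lia.
by apply/set0Pn; exists r; rewrite inE reach //; case/andP: g.
Qed.

Lemma undelivered_absurd : False.
Proof.
have [x xW indeg] := exists_indegree_ge receivers_nonempty receivers_outdegree.
set S := [set w in receivers | sig_reaches w x] in indeg.
have S0 : enum S != [::].
  by rewrite -size_eq0 -cardE -lt0n; apply: leq_trans indeg; have := quorum_majority; lia.
have [|K [[w0 _ [b [src [E g _]]]] late]] := latest_witness S0 (P := fun w => sig_received_at w x).
  by move=> w; rewrite mem_enum inE => /andP[_ /asboolP].
have [_ _ thr] := accept_good E g.
have ax : actor (ev K) = Some x by rewrite E.
suff /thr : n + t < 2 * size (savedFor (L x K.+1) tr) by apply/negP; exact: undelivered ax.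
apply: leq_trans quorum_majority _.
rewrite leq_mul2l /= (leq_trans indeg) // cardE -(size_map (fun w => (w, tr))).
apply: uniq_leq_size => [|_ /mapP [w /late [K' K'K [b' [src' [E' g' wsig]]]] ->]].
  by rewrite map_inj_uniq ?enum_uniq // => ? ? [].
rewrite mem_savedFor eqxx andbT; apply: (@saved_lst_mono x K'.+1 K.+1); first by rewrite ltnS.
by have [sav _ _] := accept_good E' g'; apply: sav.
Qed.
End Validity.
End Execution.

Theorem mainTheorem5 (n t d : nat) (M : eqType) (B : {set 'I_n})
    (ev : nat -> event n M) :
  3 * t + 2 * d < n ->
  #|B| <= t ->
  d < n - #|B| ->
  valid_execution t d B ev ->
  forall (k : nat) (i : 'I_n) (m : M) (sn : nat),
    ev k = Invoke i m sn ->
    exists (k' : nat) (j : 'I_n),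
      [/\ j \notin B, actor (ev k') = Some j & (m, sn, i) \in delivers t ev k'].
Proof.
(* The hypothesis [d < n - #|B|] follows from the first two. *)
move=> n_large B_small _ V k i m sn invoked; apply: contrapT => none.
apply: (undelivered_absurd V invoked _ n_large B_small) => K x ax.
apply/negP => delivered; apply: none; exists K, x; split=> //.
exact: (actor_correct V ax).
Qed.
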